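(* Let $q\geq 2$ be a prime power. In $\mathrm{PG}(2,q^2)$ there exists a semioval $\mathcal{S}\subset\mathcal{H}_q$ of size $k$ for every integer $k\in\{q^3-q^2+q\}\cup[q^3-q^2+q+2,\,q^3+1]$.
   Context: $\mathrm{PG}(2,q^2)$ is the Desarguesian projective plane over $\mathbb{F}_{q^2}$. $\mathcal{H}_q$ denotes the Hermitian curve, the set of points of $\mathrm{PG}(2,q^2)$ satisfying $X_2X_0^q+X_2^qX_0+X_1^{q+1}=0$ (it has $q^3+1$ points). A semioval is a non-empty pointset $\mathcal{S}$ such that for every $P\in\mathcal{S}$ there is a unique line $t_P$ with $\mathcal{S}\cap t_P=\{P\}$. *)

From HB Require Import structures.
From mathcomp Require Import all_boot all_order all_algebra.
Set Implicit Arguments. Unset Strict Implicit. Unset Printing Implicit Defensive.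
Import GRing.Theory.
Local Open Scope ring_scope.

(* Points (and lines) of PG(2,F) are represented by normalized homogeneous
   coordinate vectors: nonzero, with first nonzero coordinate equal to 1.
   Coordinates are indexed 0,1,2 as (X0,X1,X2). *)
Definition normalized (F : fieldType) (v : 'rV[F]_3) : bool :=
  [exists i : 'I_3, (v 0 i == 1) && [forall j : 'I_3, (j < i)%N ==> (v 0 j == 0)]].

Definition PGpoints (F : finFieldType) : {set 'rV[F]_3} :=
  [set v | normalized v].

Definition incident (F : fieldType) (v l : 'rV[F]_3) : bool :=
  \sum_(i < 3) v 0 i * l 0 i == 0.

Definition hermitian_curve (F : finFieldType) (q : nat) : {set 'rV[F]_3} :=
  [set v | normalized v &
     v 0 2%:R * v 0 0%:R ^+ q + v 0 2%:R ^+ q * v 0 0%:R + v 0 1%:R ^+ q.+1 == 0].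

Definition semioval (F : finFieldType) (S : {set 'rV[F]_3}) : Prop :=
  S \subset PGpoints F /\ S != set0 /\
  forall P, P \in S ->
    exists! l : 'rV[F]_3,
      [&& normalized l, incident P l & [forall Q in S, incident Q l ==> (Q == P)]].

(* Every line through a point P of the Hermitian curve H is either the tangent
   at P (the polar line of P), which meets H only in P, or meets H in q + 1
   points.  A secant through an affine point P which is not vertical (does not
   pass through P_inf = (0,0,1)) carries q further points of H, parametrized by
   the elements u <> 1 of norm 1, and their X1-coordinates are pairwise
   distinct.  Hence a subset S of H is a semioval as soon as it contains every
   point of H whose X1-coordinate lies outside a set C of fewer than q values,
   and the vertical lines are handled: either P_inf is in S and every vertical
   line meets S, or P_inf is not in S and no vertical line meets S in exactly
   one point.  Removing suitable points of H above q - 1 values of X1 then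
   gives semiovals of all the sizes claimed. *)

From HB Require Import structures.
From mathcomp Require Import all_boot all_order all_algebra finfield.
From mathcomp Require Import zify ring.
Set Implicit Arguments. Unset Strict Implicit. Unset Printing Implicit Defensive.
Import GRing.Theory.
Local Open Scope ring_scope.

Section Coordinates.
Variable F : fieldType.

Definition row3 (a b c : F) : 'rV[F]_3 := \row_(i < 3) nth 0 [:: a; b; c] i.

Lemma row3_0 a b c : row3 a b c 0 0%:R = a. Proof. by rewrite mxE. Qed.
Lemma row3_1 a b c : row3 a b c 0 1%:R = b. Proof. by rewrite mxE. Qed.
Lemma row3_2 a b c : row3 a b c 0 2%:R = c. Proof. by rewrite mxE. Qed.

Lemma row3_coord (v : 'rV[F]_3) : v = row3 (v 0 0%:R) (v 0 1%:R) (v 0 2%:R).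
Proof.
by apply/rowP => -[[|[|[|i]]] lti] //=; rewrite mxE //=; congr (v _ _); apply: val_inj.
Qed.

Lemma row3_inj a b c a' b' c' :
  row3 a b c = row3 a' b' c' -> [/\ a = a', b = b' & c = c'].
Proof.
move=> e; split.
- by rewrite -(row3_0 a b c) e row3_0.
- by rewrite -(row3_1 a b c) e row3_1.
- by rewrite -(row3_2 a b c) e row3_2.
Qed.

Lemma normalized_row3 a b c : normalized (row3 a b c) =
  (a == 1) || (a == 0) && ((b == 1) || (b == 0) && (c == 1)).
Proof.
apply/existsP/idP => [[i /andP [ai1 /forallP a0]]|].
  have := a0 ord0; have := a0 (inord 1); rewrite !mxE /=.
  move: ai1; rewrite mxE; case: i {a0} => -[|[|[|i]]] //= _ /eqP->; rewrite ?inordK //=.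
  - by rewrite eqxx.
  - by move=> _ ->; rewrite eqxx orbT.
  - by move=> -> ->; rewrite eqxx !orbT.
case/orP => [a1|/andP [/eqP a0 /orP [b1|/andP [/eqP b0 c1]]]].
- by exists ord0; rewrite mxE a1; apply/forallP => -[].
- exists (inord 1); rewrite mxE inordK //= b1; apply/forallP => j.
  by rewrite mxE; case: j => -[|[|[|j]]] //= _; apply/eqP.
- exists (inord 2); rewrite mxE inordK //= c1; apply/forallP => j.
  by rewrite mxE; case: j => -[|[|[|j]]] //= _; apply/eqP.
Qed.

Lemma incident_row3 a b c d e f :
  incident (row3 a b c) (row3 d e f) = (a * d + b * e + c * f == 0).
Proof. by rewrite /incident !big_ord_recr big_ord0 /= !mxE /= add0r. Qed.

Lemma incident_row3_scale v k a b c : k != 0 ->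
  incident v (row3 (k * a) (k * b) (k * c)) = incident v (row3 a b c).
Proof.
move=> k0; rewrite (row3_coord v) !incident_row3.
set x := v 0 0%:R; set y := v 0 1%:R; set z := v 0 2%:R.
have -> : x * (k * a) + y * (k * b) + z * (k * c) = k * (x * a + y * b + z * c) by ring.
by rewrite mulf_eq0 (negbTE k0).
Qed.

Lemma normalized_row3_scale a b c k : normalized (row3 a b c) ->
  normalized (row3 (k * a) (k * b) (k * c)) -> k = 1.
Proof.
rewrite !normalized_row3.
case/orP => [/eqP->|/andP [/eqP-> /orP [/eqP->|/andP [/eqP-> /eqP->]]]];
  rewrite !(mulr1, mulr0, eqxx, oner_eq0, eq_sym 0 1) ?orbF ?andbF //=.
1,2: by case/orP => [/eqP //|/andP [/eqP ->]]; rewrite !mul0r eq_sym oner_eq0 ?andbF.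
by move/eqP.
Qed.

Definition normalize3 (a b c : F) : 'rV[F]_3 :=
  let k := (if a != 0 then a else if b != 0 then b else c)^-1 in
  row3 (k * a) (k * b) (k * c).

Lemma normalize3_scale a b c : [|| a != 0, b != 0 | c != 0] ->
  exists2 k, k != 0 & normalize3 a b c = row3 (k * a) (k * b) (k * c).
Proof.
move=> abc; exists (if a != 0 then a else if b != 0 then b else c)^-1 => //.
rewrite invr_eq0; case: ifP => // /negbFE/eqP a0; case: ifP => // /negbFE/eqP b0.
by move: abc; rewrite a0 b0 eqxx.
Qed.

Lemma normalized_normalize3 a b c : [|| a != 0, b != 0 | c != 0] ->
  normalized (normalize3 a b c).
Proof.
rewrite /normalize3 normalized_row3.
case: ifP => [a0 _|/negbFE a0]; first by rewrite mulVf ?eqxx.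
case: ifP => [b0 _|/negbFE b0 /=]; first by rewrite (eqP a0) mulr0 mulVf ?eqxx ?orbT.
by rewrite (eqP a0) (eqP b0) => c0; rewrite !mulr0 mulVf ?eqxx ?orbT.
Qed.

Lemma incident_normalize3 v a b c : [|| a != 0, b != 0 | c != 0] ->
  incident v (normalize3 a b c) = incident v (row3 a b c).
Proof. by case/normalize3_scale => k k0 ->; apply: incident_row3_scale. Qed.

End Coordinates.

Lemma semioval_of_tangents (F : finFieldType) (S : {set 'rV[F]_3})
    (t : 'rV[F]_3 -> 'rV[F]_3) :
  S \subset PGpoints F -> S != set0 ->
  (forall P, P \in S -> normalized (t P) /\ incident P (t P)) ->
  (forall P Q, P \in S -> Q \in S -> incident Q (t P) -> Q = P) ->
  (forall P l, P \in S -> normalized l -> incident P l -> l != t P ->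
     exists2 Q, Q \in S :\ P & incident Q l) ->
  semioval S.
Proof.
move=> SPG S0 tP tS secant; split=> //; split=> // P PS; exists (t P); split.
  have [tn Pt] := tP P PS; rewrite tn Pt; apply/forall_inP => Q QS.
  by apply/implyP => /(tS _ _ PS QS) ->.
move=> l /and3P [ln Pl /forall_inP lS]; apply/eqP; rewrite eq_sym; apply: contraT => ltP.
have [Q /setD1P [QP QS]] := secant _ _ PS ln Pl ltP.
by move/(implyP (lS Q QS)); rewrite (negbTE QP).
Qed.

Lemma exists_subset_card (T : finType) (A : {set T}) n : (n <= #|A|)%N ->
  exists2 B : {set T}, B \subset A & #|B| = n.
Proof.
case/card_geqP => s [s_uniq s_size sA]; exists [set x in s].
  by apply/subsetP => x; rewrite inE => /sA.
by rewrite cardsE (card_uniqP s_uniq).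
Qed.

Lemma card_le_image_kernel (T U : finType) (f : T -> U) (g : T -> T -> T)
    (D K : {set T}) :
  {in D &, forall s x, f s = f x -> g s x \in K} ->
  {in D, forall s, {in D &, injective (g s)}} ->
  (#|D| <= #|f @: D| * #|K|)%N.
Proof.
move=> gK g_inj; pose h x := (f x, oapp (g^~ x) x [pick s in D | f s == f x]).
rewrite -cardsX -(card_in_imset (f := h)).
  apply/subset_leq_card/subsetP => _ /imsetP [x xD ->]; rewrite in_setX imset_f //=.
  by case: pickP => [s /andP [sD /eqP]|/(_ x)]; [exact: gK | rewrite xD eqxx].
move=> x y xD yD [fxy]; rewrite /h fxy.
case: pickP => [s /andP [sD _]|/(_ y)]; last by rewrite yD eqxx.
exact: g_inj.
Qed.

Section Hermitian.
Variables (F : finFieldType) (q : nat).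
Hypothesis pcharq : [pchar F].-nat q.
Hypothesis cardF : #|F| = (q ^ 2)%N.

Lemma q_gt1 : (1 < q)%N.
Proof.
have : (1 < #|F|)%N by apply/card_gt1P; exists 0, 1; rewrite eq_sym oner_eq0.
by rewrite cardF; case: q => [|[|]].
Qed.

Lemma q_gt0 : (0 < q)%N. Proof. exact: ltnW q_gt1. Qed.

Definition conjq (x : F) := x ^+ q.

Lemma conjqD x y : conjq (x + y) = conjq x + conjq y.
Proof. exact: exprDn_pchar. Qed.
Lemma conjqN x : conjq (- x) = - conjq x.
Proof. exact: exprNn_pchar. Qed.
Lemma conjqB x y : conjq (x - y) = conjq x - conjq y.
Proof. by rewrite conjqD conjqN. Qed.
Lemma conjqM x y : conjq (x * y) = conjq x * conjq y.
Proof. exact: exprMn. Qed.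
Lemma conjqV x : conjq x^-1 = (conjq x)^-1.
Proof. exact: exprVn. Qed.
Lemma conjq1 : conjq 1 = 1. Proof. exact: expr1n. Qed.
Lemma conjq0 : conjq 0 = 0. Proof. by rewrite /conjq expr0n eqn0Ngt q_gt0. Qed.
Lemma conjq_eq0 x : (conjq x == 0) = (x == 0).
Proof. by rewrite /conjq expf_eq0 q_gt0. Qed.
Lemma conjqK x : conjq (conjq x) = x.
Proof. by rewrite /conjq -exprM mulnn -cardF expf_card. Qed.

Definition trace (x : F) := x + conjq x.
Definition norm (x : F) := x * conjq x.

Definition Fq := [set x : F | conjq x == x].
Definition ker_trace := [set x : F | trace x == 0].
Definition norm1 := [set x : F | norm x == 1].

Lemma traceD x y : trace (x + y) = trace x + trace y.
Proof. by rewrite /trace conjqD addrACA. Qed.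
Lemma traceB x y : trace (x - y) = trace x - trace y.
Proof. by rewrite /trace conjqB addrACA opprD. Qed.
Lemma normM x y : norm (x * y) = norm x * norm y.
Proof. by rewrite /norm conjqM mulrACA. Qed.
Lemma normV x : norm x^-1 = (norm x)^-1.
Proof. by rewrite /norm conjqV invfM. Qed.
Lemma norm_eq0 x : (norm x == 0) = (x == 0).
Proof. by rewrite mulf_eq0 conjq_eq0 orbb. Qed.

Lemma trace_Fq x : trace x \in Fq.
Proof. by rewrite inE /trace conjqD conjqK addrC. Qed.
Lemma norm_Fq x : norm x \in Fq.
Proof. by rewrite inE /norm conjqM conjqK mulrC. Qed.

Lemma card_roots_Xq_le (a : F) : (#|[set x : F | (x ^+ q == a * x)%R]| <= q)%N.
Proof.
pose p : {poly F} := 'X^q - a *: 'X.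
have size_p : size p = q.+1.
  rewrite size_polyDl ?size_polyXn // size_polyN ltnS.
  by apply: leq_trans (size_scale_leq _ _) _; rewrite size_polyX q_gt1.
have p_neq0 : p != 0 by rewrite -size_poly_eq0 size_p.
rewrite cardE -ltnS -size_p; apply: max_poly_roots (enum_uniq _) => //.
by apply/allP => x; rewrite mem_enum inE /root !hornerE subr_eq0 mulrC.
Qed.

Lemma card_Fq_le : (#|Fq| <= q)%N.
Proof.
apply: leq_trans (card_roots_Xq_le 1); apply/subset_leq_card/subsetP => x.
by rewrite !inE mul1r.
Qed.

Lemma card_ker_trace_le : (#|ker_trace| <= q)%N.
Proof.
apply: leq_trans (card_roots_Xq_le (-1)); apply/subset_leq_card/subsetP => x.
by rewrite !inE mulN1r /trace addrC addr_eq0.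
Qed.

Lemma card_trace_image : (q ^ 2 <= #|trace @: setT| * #|ker_trace|)%N.
Proof.
rewrite -cardF -cardsT; apply: (card_le_image_kernel (g := fun s x => x - s)).
  by move=> s x _ _ e; rewrite inE traceB e subrr.
by move=> s _ x y _ _ /addIr.
Qed.

Lemma trace_image_sub : trace @: setT \subset Fq.
Proof. by apply/subsetP => _ /imsetP [x _ ->]; apply: trace_Fq. Qed.

Lemma card_ker_trace : #|ker_trace| = q.
Proof.
apply/eqP; rewrite eqn_leq card_ker_trace_le -(leq_pmul2l q_gt0) mulnn.
apply: leq_trans card_trace_image _; rewrite leq_mul2r.
by rewrite (leq_trans (subset_leq_card trace_image_sub)) ?card_Fq_le ?orbT.
Qed.

Lemma trace_onto : trace @: setT = Fq.
Proof.
apply/eqP; rewrite eqEcard trace_image_sub (leq_trans card_Fq_le) //.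
by have := card_trace_image; rewrite card_ker_trace -mulnn leq_pmul2r // q_gt0.
Qed.

Lemma card_Fq0_le : (#|Fq :\ 0%R| <= q.-1)%N.
Proof.
have := card_Fq_le; rewrite (cardsD1 0 Fq) inE conjq0 eqxx add1n.
by case: q.
Qed.

Lemma card_norm1 : (q < #|norm1|)%N.
Proof.
have card_image : (#|norm @: [set~ (0%R : F)]| <= q.-1)%N.
  apply: leq_trans card_Fq0_le; apply/subset_leq_card/subsetP => _ /imsetP [x + ->].
  by rewrite in_setC1 in_setD1 norm_eq0 => ->; rewrite norm_Fq.
have : (q.-1 * q.+1 <= #|norm @: [set~ (0%R : F)]| * #|norm1|)%N.
  have -> : (q.-1 * q.+1 = #|[set~ (0%R : F)]|)%N.
    by rewrite cardsC1 cardF; move: q_gt1; nia.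
  apply: (card_le_image_kernel (g := fun s x => x / s)).
    by move=> s x; rewrite !inE => s0 _ e; rewrite normM normV e mulfV // -e norm_eq0.
  by move=> s s0 x y _ _; apply: mulIf; move: s0; rewrite !inE invr_eq0.
move/leq_trans/(_ (leq_mul card_image (leqnn _))).
by rewrite leq_pmul2l // -subn1 subn_gt0 q_gt1.
Qed.

(* A point [Paff x (z0 x)] of H; the others above [x] are the
   [Paff x (z0 x + k)] with [k \in ker_trace]. *)
Definition z0 (x : F) := odflt 0 [pick z | trace z == - norm x].

Lemma trace_z0 x : trace (z0 x) = - norm x.
Proof.
rewrite /z0; case: pickP => [z /eqP //|none].
have : - norm x \in trace @: setT.
  by rewrite trace_onto inE conjqN; have := norm_Fq x; rewrite inE => /eqP ->.
by case/imsetP => z _ /esym/eqP; rewrite none.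
Qed.

Local Notation H := (hermitian_curve F q).

Definition Pinf : 'rV[F]_3 := row3 0 0 1.
Definition Paff (x z : F) : 'rV[F]_3 := row3 1 x z.
Definition hpoint (p : F * F) := Paff p.1 (z0 p.1 + p.2).

Lemma Pinf_H : Pinf \in H.
Proof.
rewrite inE normalized_row3 row3_0 row3_1 row3_2 !eqxx !orbT /=.
by rewrite !mulr0 !expr0n eqn0Ngt q_gt0 /= mulr0 !addr0.
Qed.

Lemma Paff_H x z : (Paff x z \in H) = (trace z + norm x == 0).
Proof.
by rewrite inE normalized_row3 eqxx row3_0 row3_1 row3_2 expr1n mulr1 exprS mulr1.
Qed.

Lemma hermitianP v : v \in H -> v = Pinf \/ exists x z, v = Paff x z.
Proof.
rewrite inE (row3_coord v) normalized_row3 !(row3_0, row3_1, row3_2).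
case/andP => /orP [/eqP->|/andP [/eqP-> /orP [/eqP->|/andP [/eqP-> /eqP->]]]] //.
- by right; eexists; eexists.
- by rewrite expr1n expr0n eqn0Ngt q_gt0 !mulr0 !add0r oner_eq0.
- by left.
Qed.

Lemma Paff_neq_Pinf x z : Paff x z != Pinf.
Proof. by apply/eqP => /row3_inj [/eqP]; rewrite oner_eq0. Qed.

Lemma Paff_inj x z x' z' : Paff x z = Paff x' z' -> x = x' /\ z = z'.
Proof. by case/row3_inj. Qed.

Lemma hermitian_sub_PG : H \subset PGpoints F.
Proof. by apply/subsetP => v; rewrite !inE => /andP []. Qed.

Lemma hpoint_inj : injective hpoint.
Proof. by move=> [x k] [x' k'] /Paff_inj /= [<-] /addrI ->. Qed.

Lemma hpoint_H x k : (hpoint (x, k) \in H) = (k \in ker_trace).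
Proof. by rewrite Paff_H /= traceD trace_z0 inE addrAC addNr add0r. Qed.

Lemma Paff_hpoint x z : Paff x z = hpoint (x, z - z0 x).
Proof. by rewrite /hpoint /= addrC subrK. Qed.

(* The polar line of [v] with respect to the Hermitian form of H. *)
Definition tangent (v : 'rV[F]_3) :=
  normalize3 (conjq (v 0 2%:R)) (conjq (v 0 1%:R)) (conjq (v 0 0%:R)).

Lemma tangent_Pinf : tangent Pinf = row3 1 0 0.
Proof.
by rewrite /tangent !(row3_0, row3_1, row3_2) conjq0 conjq1 /normalize3 oner_eq0 invr1 !mul1r.
Qed.

Lemma tangent_Paff x z : tangent (Paff x z) = normalize3 (conjq z) (conjq x) 1.
Proof. by rewrite /tangent !(row3_0, row3_1, row3_2) conjq1. Qed.

Lemma tangent_spec P : P \in H -> normalized (tangent P) /\ incident P (tangent P).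
Proof.
move=> PH; have [->|[x [z ePxz]]] := hermitianP PH.
  by rewrite tangent_Pinf normalized_row3 incident_row3 eqxx !mul0r mul1r !addr0.
move: PH; rewrite ePxz Paff_H tangent_Paff => /eqP hz.
rewrite normalized_normalize3 ?incident_normalize3 ?oner_eq0 ?orbT // incident_row3.
by split=> //; apply/eqP; rewrite -hz /trace /norm; ring.
Qed.

Lemma tangent_meets_H P Q : P \in H -> Q \in H -> incident Q (tangent P) -> Q = P.
Proof.
move=> PH QH.
have [->|[x [z ePxz]]] := hermitianP PH; have [->|[y [w eQyw]]] := hermitianP QH;
  rewrite ?ePxz ?eQyw //.
- by rewrite tangent_Pinf incident_row3 !mulr0 mulr1 !addr0 oner_eq0.
- rewrite tangent_Paff incident_normalize3 ?oner_eq0 ?orbT //.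
  by rewrite incident_row3 !mul0r !add0r mulr1 oner_eq0.
move: PH QH; rewrite ePxz eQyw !Paff_H tangent_Paff.
rewrite incident_normalize3 ?oner_eq0 ?orbT // incident_row3 mul1r mulr1.
move=> /eqP hz /eqP hw /eqP hP.
have hP' : conjq w + z + conjq y * x = 0.
  by rewrite -conjq0 -hP !conjqD conjqM !conjqK; ring.
have : norm (y - x) = trace w + norm y - (conjq z + y * conjq x + w)
                      - (conjq w + z + conjq y * x) + (trace z + norm x).
  by rewrite /trace /norm conjqB; ring.
rewrite hw hP hP' hz !subr0 addr0 => /eqP; rewrite norm_eq0 subr_eq0 => /eqP exy.
subst y; have : w - z = conjq z + x * conjq x + w - (trace z + norm x).
  by rewrite /trace /norm; ring.
by rewrite hP hz subr0 => /eqP; rewrite subr_eq0 => /eqP ->.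
Qed.

Lemma lines_through_Pinf l : normalized l -> incident Pinf l ->
  l = row3 1 0 0 \/ exists c, forall w, incident (Paff c w) l.
Proof.
rewrite (row3_coord l) /Pinf incident_row3 !mul0r !add0r mul1r.
set a := l 0 0%:R; set b := l 0 1%:R; set c := l 0 2%:R => ln /eqP c0.
have [b0|b0] := eqVneq b 0.
  left; move: ln; rewrite b0 c0 normalized_row3 eqxx (eq_sym 0 1) oner_eq0 /=.
  by rewrite andbF orbF => /eqP ->.
right; exists (- a / b) => w; rewrite incident_row3 c0 mulr0 addr0 mul1r.
by rewrite divfK // addrN.
Qed.

Lemma vertical_line l x z w :
  incident Pinf l -> incident (Paff x z) l -> incident (Paff x w) l.
Proof.
rewrite (row3_coord l) !incident_row3 !mul0r !add0r mul1r => /eqP ->.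
by rewrite !mulr0 !addr0.
Qed.

Lemma eq_tangent_Paff x z a b c :
  trace z + norm x = 0 -> normalized (row3 a b c) -> a + x * b + z * c = 0 ->
  b = c * conjq x -> row3 a b c = tangent (Paff x z).
Proof.
move=> hz ln hl eb.
have ea : a = c * conjq z.
  have : a - c * conjq z = a + x * b + z * c - c * (trace z + norm x).
    by rewrite eb /trace /norm; ring.
  by rewrite hl hz mulr0 subr0 => /eqP; rewrite subr_eq0 => /eqP.
have nz : [|| conjq z != 0, conjq x != 0 | (1 : F) != 0] by rewrite oner_neq0 !orbT.
have [k k0 ek] := normalize3_scale nz.
have := normalized_normalize3 nz; rewrite tangent_Paff ek => kn.
have ck : c / k = 1.
  by apply: normalized_row3_scale kn _; rewrite !mulrA divfK // mulr1 -ea -eb.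
by rewrite ea eb -[c](divfK k0) ck !mul1r mulr1.
Qed.

Lemma nonvertical_secant x z l :
  Paff x z \in H -> normalized l -> incident (Paff x z) l -> ~~ incident Pinf l ->
  l != tangent (Paff x z) ->
  exists2 X : {set F}, (q <= #|X|)%N &
    forall y, y \in X -> y != x /\ exists w, Paff y w \in H /\ incident (Paff y w) l.
Proof.
rewrite (row3_coord l) Paff_H /Pinf !incident_row3 !mul0r !add0r !mul1r.
set a := l 0 0%:R; set b := l 0 1%:R; set c := l 0 2%:R.
move=> /eqP hz ln /eqP hl c0 ntan.
set s := b / c; set d := conjq x - s.
have d0 : d != 0.
  apply: contra_neq ntan => /eqP; rewrite subr_eq0 => /eqP xs.
  by apply: eq_tangent_Paff => //; rewrite xs mulrC divfK.
(* The points of H on [l] are the [Paff (f u) (z - s * (f u - x))] with [u] of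
   norm 1, and [u = 1] gives [Paff x z]. *)
pose f u := x + conjq d * (u - 1).
have f_inj : injective f.
  by move=> u v /addrI /(mulfI _) /addIr; apply; rewrite conjq_eq0.
exists (f @: (norm1 :\ 1)).
  by have := card_norm1; rewrite card_imset // (cardsD1 1 norm1) inE /norm conjq1 mulr1 eqxx.
move=> _ /imsetP [u + ->] => /setD1P [u1]; rewrite inE => /eqP nu1.
set t := conjq d * (u - 1).
split; first by rewrite -subr_eq0 /f addrC addKr mulf_neq0 ?conjq_eq0 // subr_eq0.
exists (z - s * t); rewrite Paff_H incident_row3 mul1r; split.
  have ct : conjq t = d * (conjq u - 1) by rewrite conjqM conjqK conjqB conjq1.
  have -> : trace (z - s * t) + norm (x + t) = trace z + norm x + d * conjq d * (norm u - 1).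
    by rewrite /trace /norm conjqB conjqM conjqD ct /t /d conjqB conjqK; ring.
  by rewrite hz nu1 subrr mulr0 addr0.
have -> : a + (x + t) * b + (z - s * t) * c = a + x * b + z * c + t * (b - s * c) by ring.
by rewrite hl /s divfK // subrr mulr0 addr0.
Qed.

Definition fiber (E : {set F * F}) x := [set k | (x, k) \in E].

Definition hset (b : bool) (E : {set F * F}) : {set 'rV[F]_3} :=
  (if b then [set Pinf] else set0) :|: hpoint @: E.

Lemma Pinf_notin_hpoint (E : {set F * F}) : Pinf \notin hpoint @: E.
Proof. by apply/imsetP => -[p _ /eqP]; rewrite eq_sym (negbTE (Paff_neq_Pinf _ _)). Qed.

Lemma Pinf_hset b E : (Pinf \in hset b E) = b.
Proof.
by rewrite in_setU (negbTE (Pinf_notin_hpoint E)) orbF; case: b; rewrite ?set11 ?in_set0.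
Qed.

Lemma Paff_hset b E x z : (Paff x z \in hset b E) = ((x, z - z0 x) \in E).
Proof.
rewrite in_setU (_ : Paff x z \in _ = false) /=; last first.
  by case: b; rewrite ?in_set1 ?in_set0 ?(negbTE (Paff_neq_Pinf _ _)).
by rewrite Paff_hpoint (mem_imset _ _ hpoint_inj).
Qed.

Lemma card_hset b E : #|hset b E| = (b + #|E|)%N.
Proof.
rewrite /hset -(card_imset E hpoint_inj); case: b; last by rewrite set0U.
by rewrite cardsU1 Pinf_notin_hpoint.
Qed.

Lemma hset_sub_H b (E : {set F * F}) :
  E \subset setX setT ker_trace -> hset b E \subset H.
Proof.
move=> EK; apply/subsetP => v; rewrite in_setU => /orP [|/imsetP [[x k] xkE ->]].
  by case: b; rewrite ?in_set1 ?in_set0 // => /eqP ->; apply: Pinf_H.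
by rewrite hpoint_H; move/(subsetP EK): xkE; rewrite in_setX => /andP [].
Qed.

Section Criterion.
Variables (b : bool) (E : {set F * F}) (C : {set F}).
Hypothesis E_sub : E \subset setX setT ker_trace.
Hypothesis card_C : (#|C| < q)%N.
Hypothesis fiber_full : forall x k, x \notin C -> k \in ker_trace -> (x, k) \in E.
Hypothesis fiber_spec :
  forall x, if b then fiber E x != set0 else #|fiber E x| != 1%N.

Local Notation S := (hset b E).

Lemma Paff_hset_outside x z : Paff x z \in H -> x \notin C -> Paff x z \in S.
Proof.
by rewrite [in X in X -> _]Paff_hpoint hpoint_H (Paff_hset b) => zK xC; apply: fiber_full.
Qed.

Lemma hset_neq0 : S != set0.
Proof.
have /subsetPn [x _ xC] : ~~ ([set: F] \subset C).
  apply: contraL card_C => /subset_leq_card; rewrite cardsT cardF -mulnn -leqNgt.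
  exact/leq_trans/leq_pmulr/q_gt0.
apply/set0Pn; exists (Paff x (z0 x)); apply: Paff_hset_outside => //.
by rewrite Paff_H trace_z0 addNr.
Qed.

Lemma secant_at_Pinf l : Pinf \in S -> normalized l -> incident Pinf l ->
  l != tangent Pinf -> exists2 Q, Q \in S :\ Pinf & incident Q l.
Proof.
rewrite Pinf_hset => b_true ln Pl; have [->|[c lc]] := lines_through_Pinf ln Pl.
  by rewrite tangent_Pinf eqxx.
move=> _; move: (fiber_spec c); rewrite b_true => /set0Pn [k]; rewrite inE => ckE.
exists (Paff c (z0 c + k)); last exact: lc.
by rewrite in_setD1 Paff_neq_Pinf Paff_hset (addrC (z0 c)) addrK.
Qed.

Lemma secant_at_Paff x z l : Paff x z \in S -> normalized l -> incident (Paff x z) l ->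
  l != tangent (Paff x z) -> exists2 Q, Q \in S :\ Paff x z & incident Q l.
Proof.
move=> PS ln Pl ntan; have PH := subsetP (hset_sub_H b E_sub) _ PS.
have [Pinf_l|Pinf_nl] := boolP (incident Pinf l).
  case: b fiber_spec PS => fiber_spec' PS.
    by exists Pinf; rewrite // in_setD1 eq_sym Paff_neq_Pinf Pinf_hset.
  set k := z - z0 x; have kE : k \in fiber E x by rewrite inE -(Paff_hset false).
  have : #|fiber E x :\ k| != 0%N.
    by move: (fiber_spec' x); rewrite (cardsD1 k) kE; apply: contra => /eqP ->.
  rewrite cards_eq0 => /set0Pn [k' /setD1P [k'k]]; rewrite inE => k'E.
  exists (Paff x (z0 x + k')); last exact: vertical_line Pl.
  rewrite in_setD1 Paff_hset (addrC (z0 x)) addrK k'E andbT.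
  by apply: contra_neq k'k => /Paff_inj [_ ez]; rewrite /k -ez addrK.
have [X card_X secX] := nonvertical_secant PH ln Pl Pinf_nl ntan.
have /subsetPn [y yX yC] : ~~ (X \subset C).
  by apply: contraL card_C => /subset_leq_card /(leq_trans card_X); rewrite leqNgt.
have [yx [w [ywH ywl]]] := secX y yX.
exists (Paff y w) => //; rewrite in_setD1 Paff_hset_outside // andbT.
by apply: contra_neq yx => /Paff_inj [].
Qed.

Lemma hset_semioval : semioval S.
Proof.
have SH := hset_sub_H b E_sub.
apply: (semioval_of_tangents (t := tangent)).
- exact: subset_trans SH hermitian_sub_PG.
- exact: hset_neq0.
- by move=> P /(subsetP SH) /tangent_spec.
- by move=> P Q /(subsetP SH) PH /(subsetP SH) QH; apply: tangent_meets_H.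
move=> P l PS; have [eP|[x [z eP]]] := hermitianP (subsetP SH _ PS); subst P.
  exact: secant_at_Pinf.
exact: secant_at_Paff.
Qed.

End Criterion.

Lemma ker_trace0 : 0 \in ker_trace.
Proof. by rewrite inE /trace conjq0 addr0. Qed.

Lemma semioval_large k : (q ^ 3 - q ^ 2 + 2 * q <= k <= q ^ 3 + 1)%N ->
  exists S, [/\ semioval S, S \subset H & #|S| = k].
Proof.
move=> /andP [k_ge k_le]; have q_gt1 := q_gt1.
have [C _ card_C] : exists2 C : {set F}, C \subset setT & #|C| = q.-1.
  by apply: exists_subset_card; rewrite cardsT cardF; nia.
have card_ker0 : #|ker_trace :\ 0| = q.-1.
  by have := cardsD1 0 ker_trace; rewrite ker_trace0 card_ker_trace => ->.
have [R R_sub card_R] : exists2 R : {set F * F},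
    R \subset setX C (ker_trace :\ 0) & #|R| = (q ^ 3 + 1 - k)%N.
  by apply: exists_subset_card; rewrite cardsX card_C card_ker0; nia.
have R_subK : R \subset setX setT ker_trace.
  exact/(subset_trans R_sub)/setXS/subD1set/subsetT.
pose E := setX setT ker_trace :\: R.
exists (hset true E); split.
- apply: (hset_semioval (C := C)) => [||x k' xC k'K|x].
  + exact: subsetDl.
  + by rewrite card_C ltn_predL q_gt0.
  + rewrite /E in_setD in_setX in_setT k'K !andbT; apply: contra xC => /(subsetP R_sub).
    by rewrite in_setX => /andP [].
  + apply/set0Pn; exists 0; rewrite inE /E in_setD in_setX in_setT ker_trace0 !andbT.
    by apply/negP => /(subsetP R_sub); rewrite in_setX in_setD1 eqxx andbF.
- exact/hset_sub_H/subsetDl.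
- rewrite card_hset cardsD (setIidPr R_subK) cardsX cardsT cardF card_ker_trace card_R.
  by rewrite -expnSr; lia.
Qed.

Lemma semioval_small m : (1 <= m <= q - 2)%N \/ m = q ->
  exists S, [/\ semioval S, S \subset H & #|S| = q ^ 3 - q ^ 2 + 2 * q - m]%N.
Proof.
move=> hm; have q_gt1 := q_gt1; have m_le_q : (m <= q)%N by case: hm; lia.
have [C1 C1_sub card_C1] : exists2 C1 : {set F}, C1 \subset [set~ 0] & #|C1| = (q - 2)%N.
  by apply: exists_subset_card; rewrite cardsC1 cardF; nia.
have [M M_sub card_M] : exists2 M : {set F}, M \subset ker_trace & #|M| = m.
  by apply: exists_subset_card; rewrite card_ker_trace; case: hm => [|->]; lia.
have C1_0 : 0 \notin C1 by apply/negP => /(subsetP C1_sub); rewrite !inE eqxx.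
pose E := setX (~: C1) ker_trace :\: setX [set 0] M.
have fiberE x : fiber E x =
    if x \in C1 then set0 else if x == 0 then ker_trace :\: M else ker_trace.
  apply/setP => k; rewrite inE /E in_setD !in_setX in_setC in_set1 /=.
  by case: (x \in C1); case: (x == 0); rewrite ?in_set0 ?in_setD ?andbF.
exists (hset false E); split.
- apply: (hset_semioval (C := 0 |: C1)) => [||x k xC kK|x].
  + exact/(subset_trans (subsetDl _ _))/setXS/subxx/subsetT.
  + by rewrite cardsU1 C1_0 card_C1; lia.
  + move: xC; rewrite in_setU1 negb_or => /andP [x0 xC1].
    have : k \in fiber E x by rewrite fiberE (negbTE xC1) (negbTE x0).
    by rewrite inE.
  + rewrite fiberE; case: (x \in C1); first by rewrite cards0.
    case: (x == 0); last by rewrite card_ker_trace; lia.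
    by rewrite cardsD (setIidPr M_sub) card_ker_trace card_M; case: hm; lia.
- apply/hset_sub_H/(subset_trans (subsetDl _ _))/setXS/subxx/subsetT.
- rewrite card_hset cardsD (setIidPr _); last by rewrite setXS ?sub1set ?inE.
  rewrite !cardsX cards1 card_M card_ker_trace (cardsCs (~: C1)) setCK cardF card_C1.
  by rewrite (expnSr q 2) -mulnn; nia.
Qed.

End Hermitian.

Local Close Scope ring_scope.

Theorem mainTheorem3 (q : nat) (F : finFieldType) :
  (2 <= q)%N ->
  (exists p n : nat, [/\ prime p, (0 < n)%N & q = p ^ n]) ->
  #|F| = (q ^ 2)%N ->
  forall k : nat,
    (k = q ^ 3 - q ^ 2 + q \/ (q ^ 3 - q ^ 2 + q + 2 <= k <= q ^ 3 + 1))%N ->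
    exists S : {set 'rV[F]_3},
      [/\ semioval S, S \subset @hermitian_curve F q & #|S| = k].
Proof.
move=> q_ge2 [p [n [p_prime _ q_pn]]] cardF k hk.
have pcharq : [pchar F]%R.-nat q.
  have pcharF : p \in [pchar F]%R.
    by apply: (card_finPcharP (n := (n * 2)%N)); rewrite // cardF q_pn expnM.
  by rewrite (eq_pnat _ (pcharf_eq pcharF)) q_pn pnatX pnat_id.
have q_cube : (2 * q <= q ^ 2 <= q ^ 3)%N.
  by rewrite !expnS expn0 muln1 leq_mul2r leq_pmull ?orbT; lia.
have [k_ge|k_lt] := leqP (q ^ 3 - q ^ 2 + 2 * q) k.
  by apply: semioval_large; rewrite // k_ge; lia.
have hm : (1 <= q ^ 3 - q ^ 2 + 2 * q - k <= q - 2)%N \/ (q ^ 3 - q ^ 2 + 2 * q - k = q)%N.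
  by lia.
have [S [S_semioval S_H card_S]] := semioval_small pcharq cardF hm.
by exists S; split=> //; rewrite card_S; lia.
Qed.
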